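(* For every causal poset $K$, $\mathrm{C}\mathrm{L}(K)=\mathrm{C}\mathrm{F}(K)\cap\mathrm{L}(K)$.
   Context: A causal poset is a poset $(K,\le)$ that is pathwise connected (for all $a,a'$ there are $a_1=a,\dots,a_{n+1}=a'$, $o_1,\dots,o_n$ with $a_i,a_{i+1}\le o_i$) and carries an irreflexive symmetric relation $\perp$ with $o\perp a,\ \tilde o\le o\Rightarrow\tilde o\perp a$. A 1-simplex of $K$ is a triple $b=(|b|;\partial_0b,\partial_1b)$ of elements of $K$ with $\partial_0b,\partial_1b\le|b|$ ($|b|$ is its support, $\partial_1b$ its starting point, $\partial_0b$ its ending point); its opposite is $\overline b=(|b|;\partial_1b,\partial_0b)$. Let $\mathrm{T}_1(K)$ be the set of 1-simplices with $\partial_0b\neq|b|$ and $\partial_1b\ne|b|$. $\mathrm{F}(K)$ is the group generated by $\mathrm{T}_1(K)$ subject to the relations $b^{-1}=\overline b$ (a free group); its elements are words $w=b_n\cdots b_1$, $b_i\in\mathrm{T}_1(K)$, and $\overline w=\overline{b_1}\cdots\overline{b_n}$ is the inverse. The support $|w|$ of a word is the set of supports of the letters of its reduced form. A word $b_n\cdots b_1$ is a path from $a$ to $o$ if $\partial_1b_1=a$, $\partial_0b_n=o$ and $\partial_0b_i=\partial_1b_{i+1}$ for $i<n$; a loop over $o$ is a path from $o$ to $o$. $\mathrm{L}(K)$ is the subgroup of $\mathrm{F}(K)$ generated by loops. Two words are causally disjoint, $w_1\perp w_2$, if there are $o_1\perp o_2$ in $K$ with every element of $|w_i|$ below $o_i$,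 $i=1,2$. A causal commutator of $\mathrm{F}(K)$ (resp. of $\mathrm{L}(K)$) is a word $w\,p_1p_2\overline{p_1}\,\overline{p_2}\,\overline w$ where $p_1,p_2$ are loops (over some $o_1$, $o_2$) with $p_1\perp p_2$ and $w\in\mathrm{F}(K)$ (resp. $w\in\mathrm{L}(K)$). $\mathrm{C}\mathrm{F}(K)$ and $\mathrm{C}\mathrm{L}(K)$ are the subgroups generated by the causal commutators of $\mathrm{F}(K)$, resp. of $\mathrm{L}(K)$. *)

(* Free group F(K) on T1(K) represented by words (lists of
   1-simplices) modulo free cancellation; subgroups are predicates on words
   closed under that equivalence. *)
From Stdlib Require Import List Relations.
Import ListNotations.
Set Implicit Arguments.

Section CausalPoset.
Variable K : Type.
Variable le : K -> K -> Prop.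
Variable perp : K -> K -> Prop.

Definition joint_upper (a b : K) : Prop := exists o, le a o /\ le b o.

Definition causal_poset : Prop :=
  (forall a, le a a) /\
  (forall a b, le a b -> le b a -> a = b) /\
  (forall a b c, le a b -> le b c -> le a c) /\
  (forall a a', clos_refl_trans_1n K joint_upper a a') /\
  (forall a, ~ perp a a) /\
  (forall a b, perp a b -> perp b a) /\
  (forall o a o', perp o a -> le o' o -> perp o' a).

Record simplex := Simplex { supp : K; bd0 : K; bd1 : K }.

Definition opp (b : simplex) : simplex := Simplex (supp b) (bd1 b) (bd0 b).

Definition T1 (b : simplex) : Prop :=
  le (bd0 b) (supp b) /\ le (bd1 b) (supp b) /\
  bd0 b <> supp b /\ bd1 b <> supp b.

(* A word b_n ... b_1 is stored as the list [b_1; ...; b_n]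
   (in the order in which the letters are traversed). *)
Definition word := list simplex.

Definition is_word (w : word) : Prop := Forall T1 w.

(* group product  u v  (v applied first) *)
Definition wmul (u v : word) : word := v ++ u.
Definition winv (w : word) : word := rev (map opp w).

Inductive cancel_step : word -> word -> Prop :=
| cancel_intro : forall l1 l2 b, T1 b ->
    cancel_step (l1 ++ b :: opp b :: l2) (l1 ++ l2).

Definition wequiv : word -> word -> Prop := clos_refl_sym_trans word cancel_step.

Definition reduced (w : word) : Prop :=
  ~ exists l1 l2 b, w = l1 ++ b :: opp b :: l2.

Definition supp_below (w : word) (o : K) : Prop :=
  forall r, reduced r -> wequiv w r -> forall b, In b r -> le (supp b) o.

Definition causally_disjoint (w1 w2 : word) : Prop :=
  exists o1 o2, perp o1 o2 /\ supp_below w1 o1 /\ supp_below w2 o2.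

Fixpoint path_from (a o : K) (w : word) : Prop :=
  match w with
  | [] => False
  | [b] => bd1 b = a /\ bd0 b = o
  | b :: w' => bd1 b = a /\ path_from (bd0 b) o w'
  end.

Definition is_loop (w : word) : Prop :=
  is_word w /\ exists o, path_from o o w.

Inductive gen (S : word -> Prop) : word -> Prop :=
| gen_base : forall w, S w -> gen S w
| gen_one : gen S []
| gen_mul : forall u v, gen S u -> gen S v -> gen S (wmul u v)
| gen_inv : forall u, gen S u -> gen S (winv u)
| gen_eq : forall u v, gen S u -> wequiv u v -> gen S v.

Definition Lgrp : word -> Prop := gen is_loop.

Definition commutator_word (w p1 p2 : word) : word :=
  wmul w (wmul p1 (wmul p2 (wmul (winv p1) (wmul (winv p2) (winv w))))).

Definition causal_commutator (H : word -> Prop) (c : word) : Prop :=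
  exists w p1 p2, H w /\ is_loop p1 /\ is_loop p2 /\
    causally_disjoint p1 p2 /\ c = commutator_word w p1 p2.

Definition CF : word -> Prop := gen (causal_commutator is_word).
Definition CL : word -> Prop := gen (causal_commutator Lgrp).

End CausalPoset.

(* One inclusion is immediate. For the other, let Q = L(K)/CL(K). We let F(K) act on
   sequences in Q so that every element of L(K) acts by right multiplication of the first
   term by its class. A causal commutator w p1 p2 p1^-1 p2^-1 w^-1 then acts trivially
   whatever w is, because p1 p2 p1^-1 p2^-1 lies in CL(K); so all of CF(K) acts trivially,
   and an element of CF(K) and L(K) has trivial class, i.e. lies in CL(K).

   To build the action, words are rewritten a la Reidemeister-Schreier along chosen walks
   from the root of each component. Read from a vertex v, this rewriting induces a
   retraction of Q onto the classes of loops at v; it is well defined because two nontrivial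
   causally disjoint loops cannot share a base point, which would lie below the supports of
   both, so the rewriting of a causal commutator is trivial. A letter b acts by transporting
   from the loops at its starting point to those at the root, multiplying by the loop through
   b, and transporting on to its end point; these transports are realised on sequences by a
   Hilbert-hotel bijection that absorbs the kernels of the retractions. *)

From Stdlib Require Import List Relations Arith Lia Setoid Morphisms.
From Stdlib Require Import Classical ClassicalEpsilon ProofIrrelevance.
From Stdlib Require Import FunctionalExtensionality PropExtensionality.
Import ListNotations.
Set Implicit Arguments.

Section HilbertHotel.
Variable G : Type.
Variables (mul : G -> G -> G) (inv : G -> G) (one : G).
Local Infix "*" := mul.
Hypothesis mulA : forall x y z, x * (y * z) = x * y * z.
Hypothesis mul1g : forall x, one * x = x.
Hypothesis mulg1 : forall x, x * one = x.
Hypothesis mulVg : forall x, inv x * x = one.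
Hypothesis mulgV : forall x, x * inv x = one.

Definition morphism (f : G -> G) : Prop := forall x y, f (x * y) = f x * f y.

Lemma mulg_cancel_l a x y : a * x = a * y -> x = y.
Proof.
  intro E. rewrite <- (mul1g x), <- (mul1g y), <- (mulVg a), <- !mulA, E. reflexivity.
Qed.

Lemma morph1 f (Hf : morphism f) : f one = one.
Proof. apply (mulg_cancel_l (a := f one)). rewrite <- Hf, !mulg1. reflexivity.
Qed.

Lemma morphV f (Hf : morphism f) x : f (inv x) = inv (f x).
Proof. apply (mulg_cancel_l (a := f x)). rewrite <- Hf, !mulgV. exact (morph1 Hf).
Qed.

Lemma invM x y : inv (x * y) = inv y * inv x.
Proof.
  apply (mulg_cancel_l (a := x * y)).
  rewrite mulgV, mulA, <- (mulA x y), mulgV, mulg1, mulgV. reflexivity.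
Qed.

Definition rmul0 (a : G) (z : nat -> G) : nat -> G :=
  fun n => match n with 0 => z 0 * a | S _ => z n end.

Lemma rmul0_rmul0 a b z : rmul0 b (rmul0 a z) = rmul0 (a * b) z.
Proof. apply functional_extensionality. intros [|n]; [apply eq_sym, mulA | reflexivity]. Qed.

Lemma rmul0_one z : rmul0 one z = z.
Proof. apply functional_extensionality. intros [|n]; [apply mulg1 | reflexivity]. Qed.

Definition map0 (f : G -> G) (z : nat -> G) : nat -> G :=
  fun n => match n with 0 => f (z 0) | S _ => z n end.

Lemma map0_rmul0 f a z : morphism f -> map0 f (rmul0 a z) = rmul0 (f a) (map0 f z).
Proof.
  intro Hf. apply functional_extensionality. intros [|n]; [apply Hf | reflexivity].
Qed.

Lemma map0_map0 f g z : g (f (z 0)) = z 0 -> map0 g (map0 f z) = z.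
Proof. intro E. apply functional_extensionality. intros [|n]; [exact E | reflexivity]. Qed.

Section Retraction.
Variable rho : G -> G.
Hypothesis rho_morph : morphism rho.
Hypothesis rho_idem : forall x, rho (rho x) = rho x.

Definition kerpart (m : G) : G := m * inv (rho m).

Lemma rho_kerpart m : rho (kerpart m) = one.
Proof. unfold kerpart. rewrite rho_morph, (morphV rho_morph), rho_idem. apply mulgV. Qed.

Lemma kerpart_mul_rho m : kerpart m * rho m = m.
Proof. unfold kerpart. rewrite <- mulA, mulVg. apply mulg1. Qed.

Lemma rho_mul_ker k a : rho k = one -> rho (k * a) = rho a.
Proof. intro Hk. rewrite rho_morph, Hk. apply mul1g. Qed.

Lemma kerpart_ker_mul k a : rho k = one -> rho a = a -> kerpart (k * a) = k.
Proof.
  intros Hk Ha. unfold kerpart. rewrite rho_mul_ker, Ha, <- mulA, mulgV; auto.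
Qed.

Lemma kerpart_mul_fixed m a : rho a = a -> kerpart (m * a) = kerpart m.
Proof.
  intro Ha. unfold kerpart. rewrite rho_morph, Ha, invM, mulA, <- (mulA m a), mulgV, mulg1.
  reflexivity.
Qed.

(* The Hilbert-hotel bijection between sequences and sequences with first term
   in the image of [rho]: each term hands its kernel part on to the next one. *)
Definition unravel (z : nat -> G) : nat -> G :=
  fun n => match n with
           | 0 => rho (z 0)
           | S n' => kerpart (z n') * rho (z (S n'))
           end.

Definition ravel (z : nat -> G) : nat -> G := fun n => kerpart (z (S n)) * rho (z n).

Lemma rho_unravel z n : rho (unravel z n) = rho (z n).
Proof. destruct n; simpl; [apply rho_idem | rewrite rho_mul_ker; auto using rho_kerpart]. Qed.

Lemma rho_ravel z n : rho (ravel z n) = rho (z n).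
Proof. unfold ravel. rewrite rho_mul_ker; auto using rho_kerpart. Qed.

Lemma ravel_unravel z : ravel (unravel z) = z.
Proof.
  apply functional_extensionality. intro n. unfold ravel at 1.
  rewrite rho_unravel. simpl. rewrite kerpart_ker_mul; auto using rho_kerpart.
  apply kerpart_mul_rho.
Qed.

Lemma unravel_ravel z : rho (z 0) = z 0 -> unravel (ravel z) = z.
Proof.
  intro H0. apply functional_extensionality. intros [|n]; simpl.
  - rewrite rho_ravel. exact H0.
  - rewrite rho_ravel. unfold ravel at 1.
    rewrite kerpart_ker_mul; auto using rho_kerpart. apply kerpart_mul_rho.
Qed.

Lemma unravel_rmul0 a z : rho a = a -> unravel (rmul0 a z) = rmul0 a (unravel z).
Proof.
  intro Ha. apply functional_extensionality. intros [|[|n]]; simpl.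
  - rewrite rho_morph, Ha. reflexivity.
  - rewrite kerpart_mul_fixed; auto.
  - reflexivity.
Qed.

Lemma ravel_rmul0 a z : rho a = a -> ravel (rmul0 a z) = rmul0 a (ravel z).
Proof.
  intro Ha. apply functional_extensionality. intros [|n]; unfold ravel; simpl.
  - rewrite rho_morph, Ha, mulA. reflexivity.
  - reflexivity.
Qed.

End Retraction.

(* Two retractions whose images are isomorphic (through [theta], [theta'])
   become conjugate once the kernels are absorbed into an infinite product. *)
Section Transfer.
Variables rho1 rho2 theta theta' : G -> G.
Hypotheses (rho1_morph : morphism rho1) (rho2_morph : morphism rho2).
Hypotheses (rho1_idem : forall x, rho1 (rho1 x) = rho1 x)
           (rho2_idem : forall x, rho2 (rho2 x) = rho2 x).
Hypothesis theta_morph : morphism theta.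
Hypotheses (theta'_theta : forall x, theta' (theta x) = rho1 x)
           (theta_theta' : forall x, theta (theta' x) = rho2 x)
           (rho2_theta : forall x, rho2 (theta x) = theta x)
           (rho1_theta' : forall x, rho1 (theta' x) = theta' x).

Definition transfer (z : nat -> G) : nat -> G := ravel rho2 (map0 theta (unravel rho1 z)).
Definition transfer_inv (z : nat -> G) : nat -> G := ravel rho1 (map0 theta' (unravel rho2 z)).

Lemma transfer_invK z : transfer_inv (transfer z) = z.
Proof.
  unfold transfer_inv, transfer. rewrite unravel_ravel by (simpl; auto).
  rewrite map0_map0 by (simpl; rewrite theta'_theta; auto). apply ravel_unravel; auto.
Qed.

Lemma transferK z : transfer (transfer_inv z) = z.
Proof.
  unfold transfer_inv, transfer. rewrite unravel_ravel by (simpl; auto).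
  rewrite map0_map0 by (simpl; rewrite theta_theta'; auto). apply ravel_unravel; auto.
Qed.

Lemma transfer_rmul0 a z : rho1 a = a -> transfer (rmul0 a z) = rmul0 (theta a) (transfer z).
Proof.
  intro Ha. unfold transfer.
  rewrite unravel_rmul0, map0_rmul0, ravel_rmul0; auto.
Qed.

End Transfer.
End HilbertHotel.

Section Words.
Variables (K : Type) (le : K -> K -> Prop).
Local Notation word := (word K).
Local Notation "u ≡ v" := (wequiv le u v) (at level 70).

Lemma opp_involutive (b : simplex K) : opp (opp b) = b.
Proof. destruct b; reflexivity. Qed.

Lemma T1_opp b : T1 le b -> T1 le (opp b).
Proof. unfold T1, opp; simpl; tauto. Qed.

Lemma winv_app (u v : word) : winv (u ++ v) = winv v ++ winv u.
Proof. unfold winv. rewrite map_app, rev_app_distr. reflexivity. Qed.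

Lemma winv_involutive (u : word) : winv (winv u) = u.
Proof.
  unfold winv. rewrite map_rev, rev_involutive, map_map.
  induction u as [|b u IH]; simpl; [reflexivity | now rewrite opp_involutive, IH].
Qed.

Lemma is_word_app (u v : word) : is_word le (u ++ v) <-> is_word le u /\ is_word le v.
Proof. apply Forall_app. Qed.

Lemma is_word_winv (u : word) : is_word le u -> is_word le (winv u).
Proof.
  intro H. apply Forall_rev, Forall_map. eapply Forall_impl; [apply T1_opp | exact H].
Qed.

Global Instance wequiv_Equivalence : Equivalence (wequiv le).
Proof.
  split; red; intros.
  - apply rst_refl.
  - now apply rst_sym.
  - eapply rst_trans; eauto.
Qed.

Lemma wequiv_cancel (l1 l2 : word) b : T1 le b -> l1 ++ b :: opp b :: l2 ≡ l1 ++ l2.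
Proof. intro Hb. apply rst_step. now constructor. Qed.

Lemma wequiv_ind (P : word -> word -> Prop) :
  (forall u, P u u) -> (forall u v, P u v -> P v u) ->
  (forall u v w, P u v -> P v w -> P u w) ->
  (forall l1 l2 b, T1 le b -> P (l1 ++ b :: opp b :: l2) (l1 ++ l2)) ->
  forall u v, u ≡ v -> P u v.
Proof.
  intros Hr Hs Ht Hc u v H. induction H as [u v []| | |]; eauto.
Qed.

Global Instance app_wequiv_Proper : Proper (wequiv le ==> wequiv le ==> wequiv le) (@app (simplex K)).
Proof.
  intros u u' Hu v v' Hv. transitivity (u' ++ v).
  - revert u u' Hu. apply wequiv_ind; try (intros; etransitivity; eauto; fail);
      [reflexivity | now symmetry |].
    intros. rewrite <- !app_assoc. now apply wequiv_cancel.
  - revert v v' Hv. apply wequiv_ind; try (intros; etransitivity; eauto; fail);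
      [reflexivity | now symmetry |].
    intros. rewrite !app_assoc. now apply wequiv_cancel.
Qed.

Global Instance cons_wequiv_Proper : Proper (eq ==> wequiv le ==> wequiv le) (@cons (simplex K)).
Proof. intros b _ <- u v H. exact (app_wequiv_Proper (reflexivity [b]) H). Qed.

Global Instance winv_wequiv_Proper : Proper (wequiv le ==> wequiv le) (@winv K).
Proof.
  intros u v. revert u v. apply wequiv_ind; try (intros; etransitivity; eauto; fail);
    [reflexivity | now symmetry |].
  intros l1 l2 b Hb. rewrite !winv_app. cbn. rewrite <- !app_assoc. cbn.
  rewrite opp_involutive. now apply wequiv_cancel.
Qed.

Lemma app_winv_r (u : word) : is_word le u -> u ++ winv u ≡ [].
Proof.
  induction u as [|b u IH]; intro H; [reflexivity |]. inversion H; subst.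
  change (winv (b :: u)) with (winv u ++ [opp b]).
  cbn. rewrite app_assoc, IH by assumption. now apply (wequiv_cancel []).
Qed.

Lemma app_winv_l (u : word) : is_word le u -> winv u ++ u ≡ [].
Proof.
  intro H. rewrite <- (winv_involutive u) at 2. now apply app_winv_r, is_word_winv.
Qed.

Lemma wequiv_of_app_winv (u v : word) : is_word le v -> u ++ winv v ≡ [] -> u ≡ v.
Proof.
  intros Hv H. transitivity (u ++ winv v ++ v).
  - now rewrite (app_winv_l Hv), app_nil_r.
  - now rewrite app_assoc, H.
Qed.

Lemma wequiv_is_word (u v : word) : u ≡ v -> (is_word le u <-> is_word le v).
Proof.
  revert u v. apply wequiv_ind; try tauto.
  intros l1 l2 b Hb. rewrite !is_word_app. unfold is_word. rewrite !Forall_cons_iff.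
  pose proof (T1_opp Hb). tauto.
Qed.

End Words.

Section Walks.
Variable K : Type.
Local Notation word := (word K).

Inductive walk : K -> K -> word -> Prop :=
| walk_nil a : walk a a []
| walk_cons a c b w : bd1 b = a -> walk (bd0 b) c w -> walk a c (b :: w).

Lemma walk_app a c (u v : word) : walk a c (u ++ v) <-> exists m, walk a m u /\ walk m c v.
Proof.
  revert a. induction u as [|b u IH]; intro a; cbn; split.
  - intro H. exists a. split; [constructor | exact H].
  - intros [m [H1 H2]]. now inversion H1; subst.
  - intro H. inversion H; subst. apply IH in H5 as [m [H1 H2]].
    exists m. split; [constructor |]; auto.
  - intros [m [H1 H2]]. inversion H1; subst. constructor; auto. apply IH. eauto.
Qed.

Lemma walk_cat a m c (u v : word) : walk a m u -> walk m c v -> walk a c (u ++ v).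
Proof. intros. apply walk_app. eauto. Qed.

Lemma walk_winv a c (u : word) : walk a c u -> walk c a (winv u).
Proof.
  induction 1 as [|a c b w <- _ IH]; [constructor |].
  eapply walk_cat; [exact IH | repeat constructor].
Qed.

Lemma walk_letter b : walk (bd1 b) (bd0 b) [b].
Proof. repeat constructor. Qed.

Lemma walk_conj a c (t w : word) : walk a c t -> walk c c w -> walk a a (t ++ w ++ winv t).
Proof. intros. eapply walk_cat; [eauto | eapply walk_cat; eauto using walk_winv]. Qed.

Lemma path_from_walk a o (w : word) : path_from a o w <-> w <> [] /\ walk a o w.
Proof.
  revert a. induction w as [|b w IH]; intro a; cbn; [split; [tauto | intros []; congruence] |].
  destruct w as [|b' w].
  - split.
    + intros [<- <-]. split; [congruence | apply walk_letter].
    + intros [_ H]. inversion H; subst. now inversion H5.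
  - rewrite IH. split.
    + intros [<- [_ H]]. split; [congruence | now constructor].
    + intros [_ H]. inversion H; subst. repeat split; auto. congruence.
Qed.

Lemma walk_cancel a c (l1 l2 : word) b : walk a c (l1 ++ b :: opp b :: l2) -> walk a c (l1 ++ l2).
Proof.
  intro H. apply walk_app in H as [m [H1 H2]].
  inversion H2 as [|? ? ? ? <- H3]; subst. inversion H3 as [|? ? ? ? _ H4]; subst.
  exact (walk_cat H1 H4).
Qed.

End Walks.

Section Subgroups.
Variables (K : Type) (le perp : K -> K -> Prop).
Local Notation word := (word K).
Local Notation "u ≡ v" := (wequiv le u v) (at level 70).

Lemma gen_app (S : word -> Prop) u v : gen le S u -> gen le S v -> gen le S (u ++ v).
Proof. intros Hu Hv. exact (gen_mul Hv Hu). Qed.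

Lemma gen_mono (S S' : word -> Prop) :
  (forall u, S u -> S' u) -> forall u, gen le S u -> gen le S' u.
Proof.
  intros HS u H. induction H; [apply gen_base | apply gen_one | apply gen_mul
    | apply gen_inv | eapply gen_eq]; eauto.
Qed.

Lemma gen_is_word (S : word -> Prop) :
  (forall u, S u -> is_word le u) -> forall u, gen le S u -> is_word le u.
Proof.
  intros HS u H. induction H as [| |u v _ IHu _ IHv| |u v _ IH E]; auto.
  - constructor.
  - now apply is_word_app.
  - now apply is_word_winv.
  - now apply (wequiv_is_word E).
Qed.

Lemma Lgrp_app u v : Lgrp le u -> Lgrp le v -> Lgrp le (u ++ v).
Proof. apply gen_app. Qed.

Lemma Lgrp_winv u : Lgrp le u -> Lgrp le (winv u).
Proof. apply gen_inv. Qed.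

Lemma Lgrp_nil : Lgrp le [].
Proof. apply gen_one. Qed.

Lemma Lgrp_is_word u : Lgrp le u -> is_word le u.
Proof. apply gen_is_word. now intros ? []. Qed.

Lemma closed_walk_Lgrp (w : word) v : is_word le w -> walk v v w -> Lgrp le w.
Proof.
  intros Hw H. destruct w as [|b w]; [apply gen_one |].
  apply gen_base. split; [exact Hw |]. exists v. apply path_from_walk. split; [discriminate | exact H].
Qed.

Lemma is_loop_walk p : is_loop le p -> exists v, walk v v p.
Proof. intros [_ [o Ho]]. exists o. now apply path_from_walk in Ho. Qed.

Lemma commutator_word_eq (w p1 p2 : word) :
  commutator_word w p1 p2 = winv w ++ (winv p2 ++ winv p1 ++ p2 ++ p1) ++ w.
Proof. unfold commutator_word, wmul. now rewrite <- !app_assoc. Qed.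

Lemma loop_commutator_Lgrp p1 p2 :
  is_loop le p1 -> is_loop le p2 -> Lgrp le (winv p2 ++ winv p1 ++ p2 ++ p1).
Proof.
  intros H1 H2. apply (gen_base le) in H1, H2.
  repeat apply gen_app; auto using gen_inv.
Qed.

Lemma CF_is_word u : CF le perp u -> is_word le u.
Proof.
  apply gen_is_word. intros c [w [p1 [p2 [Hw [[H1 _] [[H2 _] [_ ->]]]]]]].
  rewrite commutator_word_eq. repeat (apply is_word_app; split); auto using is_word_winv.
Qed.

Lemma CL_Lgrp u : CL le perp u -> Lgrp le u.
Proof.
  intro H. induction H as [c [w [p1 [p2 [Hw [H1 [H2 [_ ->]]]]]]]| | | |];
    [| apply gen_one | now apply gen_mul | now apply gen_inv | eapply gen_eq; eauto].
  rewrite commutator_word_eq.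
  apply gen_app; [now apply gen_inv | apply gen_app; [apply loop_commutator_Lgrp |]];
    assumption.
Qed.

Lemma CL_CF u : CL le perp u -> CF le perp u.
Proof.
  apply gen_mono. intros c [w [p1 [p2 [Hw H]]]].
  exists w, p1, p2. split; [exact (Lgrp_is_word Hw) | exact H].
Qed.

Lemma loop_commutator_CL p1 p2 : is_loop le p1 -> is_loop le p2 ->
  causally_disjoint le perp p1 p2 -> CL le perp (winv p2 ++ winv p1 ++ p2 ++ p1).
Proof.
  intros H1 H2 D. apply gen_base. exists [], p1, p2.
  split; [apply gen_one | do 3 (split; [assumption |])].
  rewrite commutator_word_eq. cbn. now rewrite app_nil_r.
Qed.

Lemma CL_conj c l : CL le perp c -> Lgrp le l -> CL le perp (winv l ++ c ++ l).
Proof.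
  intros H Hl. pose proof (Lgrp_is_word Hl) as Wl.
  induction H as [c [w [p1 [p2 [Hw [H1 [H2 [D ->]]]]]]]| |u v _ IHu _ IHv|u _ IH|u v _ IH E].
  - apply gen_base. exists (w ++ l), p1, p2.
    split; [now apply gen_app | do 3 (split; [assumption |])].
    rewrite !commutator_word_eq, winv_app. now rewrite <- !app_assoc.
  - eapply gen_eq; [apply gen_one |]. cbn. symmetry. now apply app_winv_l.
  - eapply gen_eq; [exact (gen_app IHv IHu) |]. unfold wmul.
    rewrite <- !app_assoc, (app_assoc l), (app_winv_r Wl). reflexivity.
  - replace (winv l ++ winv u ++ l) with (winv (winv l ++ u ++ l))
      by now rewrite !winv_app, winv_involutive, app_assoc.
    now apply gen_inv.
  - eapply gen_eq; [exact IH |]. now rewrite E.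
Qed.

End Subgroups.

Local Notation decide P := (excluded_middle_informative P).

Section Components.
Variables (K : Type) (le : K -> K -> Prop).
Local Notation word := (word K).

Definition linked (u v : K) : Prop := exists w : word, is_word le w /\ walk u v w.

Lemma linked_refl u : linked u u.
Proof. exists []. split; constructor. Qed.

Lemma linked_sym u v : linked u v -> linked v u.
Proof. intros [w [Hw H]]. exists (winv w). auto using is_word_winv, walk_winv. Qed.

Lemma linked_trans u v x : linked u v -> linked v x -> linked u x.
Proof.
  intros [w [Hw H]] [w' [Hw' H']]. exists (w ++ w').
  split; [now apply is_word_app | exact (walk_cat H H')].
Qed.

Definition root (u : K) : K := epsilon (inhabits u) (fun z => linked z u).

Lemma linked_root u : linked (root u) u.
Proof. unfold root. apply epsilon_spec. exists u. apply linked_refl. Qed.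

Lemma root_eq u v : linked u v -> root u = root v.
Proof.
  intro H. unfold root.
  replace (fun z => linked z u) with (fun z => linked z v).
  - f_equal. apply proof_irrelevance.
  - apply functional_extensionality. intro z. apply propositional_extensionality.
    split; intro; eauto using linked_trans, linked_sym.
Qed.

Lemma root_idem u : root (root u) = root u.
Proof. apply root_eq, linked_root. Qed.

Lemma root_T1 b : T1 le b -> root (bd0 b) = root (bd1 b).
Proof.
  intro H. symmetry. apply root_eq. exists [b].
  split; [now constructor | apply walk_letter].
Qed.

(* The spanning tree of the Reidemeister-Schreier rewriting below; the root itself
   gets the empty walk. *)
Definition spine (u : K) : word :=
  if decide (u = root u) then []
  else proj1_sig (constructive_indefinite_description _ (linked_root u)).

Lemma spine_spec u : is_word le (spine u) /\ walk (root u) u (spine u).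
Proof.
  unfold spine. destruct (decide _) as [E|_].
  - rewrite <- E. split; constructor.
  - apply proj2_sig.
Qed.

Lemma spine_is_word u : is_word le (spine u).
Proof. apply spine_spec. Qed.

Lemma spine_walk u : walk (root u) u (spine u).
Proof. apply spine_spec. Qed.

Lemma spine_root u : spine (root u) = [].
Proof. unfold spine. destruct (decide _) as [_|NE]; [reflexivity | now rewrite root_idem in NE]. Qed.

End Components.

Section Cocycle.
Variables (K : Type) (le : K -> K -> Prop).
Local Notation word := (word K).
Local Notation "u ≡ v" := (wequiv le u v) (at level 70).
Local Notation root := (root le).
Local Notation spine := (spine le).

Definition swap (r a u : K) : K := if decide (u = r) then a else if decide (u = a) then r else u.

Lemma swap_involutive r a u : swap r a (swap r a u) = u.
Proof.
  unfold swap. repeat (destruct (decide _); subst); congruence.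
Qed.

Lemma swap_eq_l r a u : swap r a u = r <-> u = a.
Proof. unfold swap. repeat (destruct (decide _); subst); split; congruence. Qed.

Lemma swap_eq_r r a u : swap r a u = a <-> u = r.
Proof. unfold swap. repeat (destruct (decide _); subst); split; congruence. Qed.

Lemma root_swap r a u : root a = r -> root r = r -> root (swap r a u) = root u.
Proof. intros Ha Hr. unfold swap. repeat (destruct (decide _); subst); congruence. Qed.

(* [step b] is the 3-cycle [bd1 b -> bd0 b -> root -> bd1 b]; together with
   [step (opp b)], its inverse, it lets every letter act on K so that walks
   carry their starting point to their end point. *)
Definition step (b : simplex K) (u : K) : K :=
  swap (root (bd1 b)) (bd0 b) (swap (root (bd1 b)) (bd1 b) u).

Definition letter_loop (b : simplex K) : word := spine (bd1 b) ++ [b] ++ winv (spine (bd0 b)).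

Fixpoint move (w : word) (u : K) : K :=
  match w with [] => u | b :: w' => move w' (step b u) end.

(* The Reidemeister-Schreier rewriting of [w] read from the point [u]: each
   letter read at its starting point is replaced by the loop [letter_loop]. *)
Fixpoint cocycle (w : word) (u : K) : word :=
  match w with
  | [] => []
  | b :: w' => (if decide (u = bd1 b) then letter_loop b else []) ++ cocycle w' (step b u)
  end.

Lemma move_app (w1 w2 : word) u : move (w1 ++ w2) u = move w2 (move w1 u).
Proof. revert u; induction w1; cbn; auto. Qed.

Lemma cocycle_app (w1 w2 : word) u :
  cocycle (w1 ++ w2) u = cocycle w1 u ++ cocycle w2 (move w1 u).
Proof. revert u; induction w1 as [|b w1 IH]; intro u; cbn; [reflexivity |]. now rewrite IH, app_assoc. Qed.

Lemma letter_loop_is_word b : T1 le b -> is_word le (letter_loop b).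
Proof.
  intro Hb. unfold letter_loop. repeat (apply is_word_app; split);
    auto using spine_is_word, is_word_winv. now constructor.
Qed.

Lemma cocycle_is_word (w : word) u : is_word le w -> is_word le (cocycle w u).
Proof.
  revert u. induction w as [|b w IH]; intros u Hw; cbn; [constructor |].
  inversion Hw; subst. apply is_word_app. split; auto.
  destruct (decide _); auto using letter_loop_is_word. constructor.
Qed.

Lemma step_eq_bd0 b u : step b u = bd0 b <-> u = bd1 b.
Proof.
  unfold step. rewrite swap_eq_r. apply swap_eq_l.
Qed.

Lemma step_opp b u : T1 le b -> step (opp b) (step b u) = u.
Proof.
  intro Hb. unfold step. cbn. rewrite <- (root_T1 Hb), !swap_involutive. reflexivity.
Qed.

Lemma letter_loop_opp b : T1 le b -> letter_loop b ++ letter_loop (opp b) ≡ [].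
Proof.
  intro Hb. unfold letter_loop. cbn. rewrite <- !app_assoc. cbn.
  rewrite (app_assoc (winv _)), (app_winv_l (spine_is_word le _)). cbn.
  rewrite (wequiv_cancel _ _ Hb). now apply app_winv_r, spine_is_word.
Qed.

Lemma move_cocycle_wequiv (w w' : word) : w ≡ w' ->
  forall u, move w u = move w' u /\ cocycle w u ≡ cocycle w' u.
Proof.
  revert w w'.
  apply (@wequiv_ind K le (fun w w' => forall u, move w u = move w' u /\ cocycle w u ≡ cocycle w' u)).
  - split; reflexivity.
  - intros u v H x. destruct (H x). split; now symmetry.
  - intros u v w H1 H2 x. destruct (H1 x), (H2 x). split; etransitivity; eauto.
  - intros l1 l2 b Hb u. change (b :: opp b :: l2) with ([b; opp b] ++ l2).
    rewrite !move_app, !cocycle_app. cbn.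
    rewrite step_opp by exact Hb. split; [reflexivity |].
    rewrite app_nil_r. apply app_wequiv_Proper; [reflexivity |].
    change (cocycle l2 (move l1 u)) with ([] ++ cocycle l2 (move l1 u)) at 2.
    apply app_wequiv_Proper; [| reflexivity].
    destruct (decide (move l1 u = bd1 b)) as [E|NE]; destruct (decide _) as [E'|NE'].
    + now apply letter_loop_opp.
    + exfalso. now apply NE', step_eq_bd0.
    + exfalso. now apply NE, step_eq_bd0.
    + reflexivity.
Qed.

Lemma cocycle_walk (w : word) a c : is_word le w -> walk a c w -> forall u,
  move w u = swap (root a) c (swap (root a) a u) /\
  cocycle w u ≡ (if decide (u = a) then spine a ++ w ++ winv (spine c) else []).
Proof.
  intros Hw H. induction H as [a|a c b w <- Hwalk IH]; intro u.
  - cbn. rewrite swap_involutive. split; [reflexivity |].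
    destruct (decide _); [symmetry; apply app_winv_r, spine_is_word | reflexivity].
  - inversion Hw as [|? ? Hb Hw']; subst. destruct (IH Hw' (step b u)) as [M C].
    rewrite <- (root_T1 Hb) in *. cbn. split.
    + rewrite M. unfold step. rewrite <- (root_T1 Hb), swap_involutive. reflexivity.
    + rewrite C. destruct (decide (u = bd1 b)) as [->|NE].
      * destruct (decide _) as [_|NE]; [| exfalso; now apply NE, step_eq_bd0].
        unfold letter_loop. rewrite <- !app_assoc. cbn.
        rewrite (app_assoc (winv _)), (app_winv_l (spine_is_word le _)). reflexivity.
      * destruct (decide _) as [E|_]; [exfalso; now apply NE, step_eq_bd0 | reflexivity].
Qed.

Lemma move_Lgrp l : Lgrp le l -> forall u, move l u = u.
Proof.
  intro H. induction H as [p Hp| |u v _ IHu _ IHv|l Hl IH|l l' _ IH E]; intro x.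
  - destruct (is_loop_walk Hp) as [v Hv].
    rewrite (proj1 (cocycle_walk (proj1 Hp) Hv x)). apply swap_involutive.
  - reflexivity.
  - unfold wmul. now rewrite move_app, IHv, IHu.
  - rewrite <- (IH (move (winv l) x)), <- move_app.
    apply (move_cocycle_wequiv (app_winv_l (Lgrp_is_word Hl))).
  - rewrite <- (proj1 (move_cocycle_wequiv E x)). apply IH.
Qed.

Lemma cocycle_Lgrp_app l1 l2 u : Lgrp le l1 -> cocycle (l1 ++ l2) u = cocycle l1 u ++ cocycle l2 u.
Proof. intro H. now rewrite cocycle_app, move_Lgrp. Qed.

Lemma cocycle_Lgrp_winv l u : Lgrp le l -> cocycle (winv l) u ≡ winv (cocycle l u).
Proof.
  intro H. apply wequiv_of_app_winv; [apply is_word_winv, cocycle_is_word, Lgrp_is_word, H |].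
  rewrite winv_involutive, <- cocycle_Lgrp_app by now apply Lgrp_winv.
  apply (move_cocycle_wequiv (app_winv_l (Lgrp_is_word H))).
Qed.

Lemma cocycle_closed_walk (w : word) u : is_word le w ->
  walk (root u) (root u) (cocycle w u) /\ root (move w u) = root u.
Proof.
  revert u. induction w as [|b w IH]; intros u Hw; cbn; [split; [constructor | reflexivity] |].
  inversion Hw as [|? ? Hb Hw']; subst.
  assert (Rs : root (step b u) = root u).
  { unfold step. rewrite !root_swap; auto using root_idem. now rewrite root_T1. }
  destruct (IH (step b u) Hw') as [Wk R]. rewrite Rs in Wk, R. split; [| exact R].
  eapply walk_cat; [| exact Wk]. destruct (decide _) as [->|_]; [| constructor].
  unfold letter_loop. eapply walk_cat; [apply spine_walk |].
  eapply walk_cat; [apply walk_letter |]. rewrite <- (root_T1 Hb). apply walk_winv, spine_walk.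
Qed.

End Cocycle.

Section CausalCommutators.
Variables (K : Type) (le perp : K -> K -> Prop).
Hypothesis HK : causal_poset le perp.
Local Notation word := (word K).
Local Notation "u ≡ v" := (wequiv le u v) (at level 70).

Lemma reduced_walk (p : word) a c : is_word le p -> walk a c p ->
  exists r, p ≡ r /\ reduced r /\ is_word le r /\ walk a c r.
Proof.
  remember (length p) as n eqn:En. revert p En.
  induction n as [n IH] using lt_wf_ind. intros p -> Hw Hp.
  destruct (classic (reduced p)) as [R|R]; [exists p; repeat split; auto; reflexivity |].
  apply NNPP in R as [l1 [l2 [b ->]]].
  apply is_word_app in Hw as [Hw1 Hw2]. inversion Hw2 as [|? ? Hb Hw3]; inversion Hw3; subst.
  destruct (IH (length (l1 ++ l2))) with (p := l1 ++ l2)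
    as [r [E [R [Wr Hr]]]]; eauto using walk_cancel.
  - rewrite !length_app. cbn. lia.
  - now apply is_word_app.
  - exists r. split; [| auto]. now rewrite (wequiv_cancel _ _ Hb).
Qed.

(* The starting point of a nontrivial reduced loop lies below the support of its first letter. *)
Lemma closed_walk_nil_or_below (p : word) v o : is_word le p -> walk v v p ->
  supp_below le p o -> p ≡ [] \/ le v o.
Proof.
  intros Hw Hp S. destruct (reduced_walk Hw Hp) as [[|b r] [E [R [Wr Hr]]]]; [now left |].
  right. inversion Wr as [|? ? [_ [Hb1 _]]]; inversion Hr; subst.
  destruct HK as [_ [_ [Htrans _]]]. eapply Htrans; [exact Hb1 |].
  apply (S _ R E). now left.
Qed.

Lemma cocycle_disjoint_loops p1 p2 u :
  is_loop le p1 -> is_loop le p2 -> causally_disjoint le perp p1 p2 ->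
  cocycle le p1 u ≡ [] \/ cocycle le p2 u ≡ [].
Proof.
  intros L1 L2 [o1 [o2 [P [S1 S2]]]].
  destruct (is_loop_walk L1) as [v1 H1], (is_loop_walk L2) as [v2 H2].
  destruct (cocycle_walk (proj1 L1) H1 u) as [_ C1], (cocycle_walk (proj1 L2) H2 u) as [_ C2].
  destruct (decide (u = v1)) as [->|]; [| now left].
  destruct (decide (v1 = v2)) as [<-|]; [| now right].
  destruct (closed_walk_nil_or_below (proj1 L1) H1 S1) as [E1|B1].
  { left. rewrite <- (proj2 (move_cocycle_wequiv E1 v1)). reflexivity. }
  destruct (closed_walk_nil_or_below (proj1 L2) H2 S2) as [E2|B2].
  { right. rewrite <- (proj2 (move_cocycle_wequiv E2 v1)). reflexivity. }
  exfalso. destruct HK as [_ [_ [_ [_ [Hirr [Hsym Hdown]]]]]].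
  apply (Hirr v1), (Hdown o1); [apply Hsym, (Hdown o2); auto |]; assumption.
Qed.

Lemma cocycle_loop_commutator p1 p2 u :
  is_loop le p1 -> is_loop le p2 -> causally_disjoint le perp p1 p2 ->
  cocycle le (winv p2 ++ winv p1 ++ p2 ++ p1) u ≡ [].
Proof.
  intros L1 L2 D. apply (gen_base le) in L1 as G1, L2 as G2.
  pose proof (cocycle_is_word u (proj1 L1)) as W1. pose proof (cocycle_is_word u (proj1 L2)) as W2.
  rewrite !cocycle_Lgrp_app by first [assumption | now apply gen_inv].
  rewrite !cocycle_Lgrp_winv by assumption.
  destruct (cocycle_disjoint_loops u L1 L2 D) as [E|E]; rewrite E; cbn.
  - rewrite app_nil_r. now apply app_winv_l.
  - now apply app_winv_l.
Qed.

Lemma cocycle_CL c u : CL le perp c -> cocycle le c u ≡ [].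
Proof.
  intro H. revert u.
  induction H as [c [w [p1 [p2 [Hw [L1 [L2 [D ->]]]]]]]| |u v Hu IHu Hv IHv|l Hl IH|l l' _ IH E];
    intro x.
  - rewrite commutator_word_eq.
    pose proof (loop_commutator_Lgrp L1 L2) as Lc.
    rewrite !cocycle_Lgrp_app by first [assumption | now apply gen_inv].
    rewrite cocycle_Lgrp_winv, (cocycle_loop_commutator x L1 L2 D) by exact Hw. cbn.
    apply app_winv_l, cocycle_is_word, (Lgrp_is_word Hw).
  - reflexivity.
  - unfold wmul. rewrite cocycle_Lgrp_app by exact (CL_Lgrp Hv). now rewrite IHv, IHu.
  - rewrite cocycle_Lgrp_winv by exact (CL_Lgrp Hl). now rewrite IH.
  - rewrite <- (proj2 (move_cocycle_wequiv E x)). apply IH.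
Qed.

End CausalCommutators.

Section Quotient.
Variables (K : Type) (le perp : K -> K -> Prop).
Local Notation word := (word K).
Local Notation "u ≡ v" := (wequiv le u v) (at level 70).
Local Notation L := (Lgrp le).
Local Notation CL := (CL le perp).

Definition same_class (x y : word) : Prop := L x /\ L y /\ CL (x ++ winv y).

Lemma CL_wequiv_nil x : x ≡ [] -> CL x.
Proof. intro E. eapply gen_eq; [apply gen_one | now symmetry]. Qed.

Lemma same_class_refl x : L x -> same_class x x.
Proof. intro H. repeat split; auto. apply CL_wequiv_nil, app_winv_r, Lgrp_is_word, H. Qed.

Lemma same_class_sym x y : same_class x y -> same_class y x.
Proof.
  intros [Hx [Hy H]]. repeat split; auto.
  replace (y ++ winv x) with (winv (x ++ winv y)) by now rewrite winv_app, winv_involutive.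
  now apply gen_inv.
Qed.

Lemma same_class_trans x y z : same_class x y -> same_class y z -> same_class x z.
Proof.
  intros [Hx [Hy H]] [_ [Hz H']]. repeat split; auto.
  eapply gen_eq; [exact (gen_app H H') |].
  rewrite <- app_assoc, (app_assoc (winv y)), (app_winv_l (Lgrp_is_word Hy)). reflexivity.
Qed.

Lemma same_class_wequiv x y : L x -> x ≡ y -> same_class x y.
Proof.
  intros Hx E. repeat split; auto; [eapply gen_eq; eauto |].
  apply CL_wequiv_nil. rewrite <- E. apply app_winv_r, Lgrp_is_word, Hx.
Qed.

Lemma same_class_app x x' y y' :
  same_class x x' -> same_class y y' -> same_class (x ++ y) (x' ++ y').
Proof.
  intros [Hx [Hx' H]] [Hy [Hy' H']].
  split; [now apply Lgrp_app | split; [now apply Lgrp_app |]].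
  assert (C := CL_conj H' (Lgrp_winv Hx)). rewrite winv_involutive in C.
  eapply gen_eq; [exact (gen_app C H) |].
  rewrite winv_app, <- !app_assoc, (app_assoc (winv x)), (app_winv_l (Lgrp_is_word Hx)).
  reflexivity.
Qed.

Lemma same_class_winv x x' : same_class x x' -> same_class (winv x) (winv x').
Proof.
  intro H. destruct (same_class_sym H) as [Hx' [Hx H']].
  split; [now apply Lgrp_winv | split; [now apply Lgrp_winv |]].
  eapply gen_eq; [exact (CL_conj H' Hx') |].
  rewrite winv_involutive, <- !app_assoc, (app_assoc (winv x')), (app_winv_l (Lgrp_is_word Hx')).
  reflexivity.
Qed.

Lemma same_class_ext x y : same_class x y -> same_class x = same_class y.
Proof.
  intro H. apply functional_extensionality. intro z. apply propositional_extensionality.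
  split; eauto using same_class_trans, same_class_sym.
Qed.

Definition quotient : Type := {P : word -> Prop | exists x, L x /\ P = same_class x}.

Definition class_rep (x : word) : word := if decide (L x) then x else [].

Lemma Lgrp_class_rep x : L (class_rep x).
Proof. unfold class_rep. destruct (decide _); [assumption | apply Lgrp_nil]. Qed.

Lemma class_rep_id x : L x -> class_rep x = x.
Proof. intro H. unfold class_rep. now destruct (decide _). Qed.

Definition class (x : word) : quotient :=
  exist _ (same_class (class_rep x)) (ex_intro _ (class_rep x) (conj (Lgrp_class_rep x) eq_refl)).

Lemma class_eq x y : L x -> L y -> class x = class y <-> same_class x y.
Proof.
  intros Hx Hy. split.
  - intro E. apply (f_equal (@proj1_sig _ _)) in E. cbn in E.
    rewrite !class_rep_id in E by assumption. rewrite E. now apply same_class_refl.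
  - intro H. apply eq_sig_hprop; [intros; apply proof_irrelevance |]. cbn.
    rewrite !class_rep_id by assumption. now apply same_class_ext.
Qed.

Lemma class_surj q : exists x, L x /\ q = class x.
Proof.
  destruct q as [P [x [Hx ->]]]. exists x. split; [exact Hx |].
  apply eq_sig_hprop; [intros; apply proof_irrelevance |]. cbn. now rewrite class_rep_id.
Qed.

Lemma class_wequiv x y : L x -> x ≡ y -> class x = class y.
Proof.
  intros Hx E. apply class_eq; [exact Hx | eapply gen_eq; eauto |]. now apply same_class_wequiv.
Qed.

Definition rep (q : quotient) : word :=
  proj1_sig (constructive_indefinite_description _ (class_surj q)).

Lemma rep_spec q : L (rep q) /\ q = class (rep q).
Proof. unfold rep. apply proj2_sig. Qed.

Lemma Lgrp_rep q : L (rep q).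
Proof. apply rep_spec. Qed.

Lemma rep_class x : L x -> same_class (rep (class x)) x.
Proof. intro H. apply class_eq; [apply Lgrp_rep | exact H |]. symmetry. apply rep_spec. Qed.

Definition qmul (p q : quotient) : quotient := class (rep p ++ rep q).
Definition qinv (q : quotient) : quotient := class (winv (rep q)).
Definition qone : quotient := class [].

Lemma qmul_class x y : L x -> L y -> qmul (class x) (class y) = class (x ++ y).
Proof.
  intros Hx Hy. apply class_eq; auto using Lgrp_app, Lgrp_rep.
  apply same_class_app; now apply rep_class.
Qed.

Lemma qinv_class x : L x -> qinv (class x) = class (winv x).
Proof.
  intro Hx. apply class_eq; auto using Lgrp_winv, Lgrp_rep.
  apply same_class_winv; now apply rep_class.
Qed.

Lemma qmulA p q r : qmul p (qmul q r) = qmul (qmul p q) r.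
Proof.
  destruct (class_surj p) as [x [Hx ->]], (class_surj q) as [y [Hy ->]],
    (class_surj r) as [z [Hz ->]].
  rewrite !qmul_class by auto using Lgrp_app. now rewrite app_assoc.
Qed.

Lemma qmul1q q : qmul qone q = q.
Proof. destruct (class_surj q) as [x [Hx ->]]. unfold qone. rewrite qmul_class; auto using Lgrp_nil. Qed.

Lemma qmulq1 q : qmul q qone = q.
Proof.
  destruct (class_surj q) as [x [Hx ->]]. unfold qone.
  rewrite qmul_class, app_nil_r; auto using Lgrp_nil.
Qed.

Lemma qmulVq q : qmul (qinv q) q = qone.
Proof.
  destruct (class_surj q) as [x [Hx ->]].
  rewrite qinv_class, qmul_class by auto using Lgrp_winv.
  apply class_wequiv; [auto using Lgrp_app, Lgrp_winv |]. apply app_winv_l, Lgrp_is_word, Hx.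
Qed.

Lemma qmulqV q : qmul q (qinv q) = qone.
Proof.
  destruct (class_surj q) as [x [Hx ->]].
  rewrite qinv_class, qmul_class by auto using Lgrp_winv.
  apply class_wequiv; [auto using Lgrp_app, Lgrp_winv |]. apply app_winv_r, Lgrp_is_word, Hx.
Qed.

Lemma class_eq_qone x : L x -> class x = qone <-> CL x.
Proof.
  intro Hx. unfold qone. rewrite class_eq by auto using Lgrp_nil.
  unfold same_class. cbn. rewrite app_nil_r. split; [tauto |]. intro; repeat split; auto using Lgrp_nil.
Qed.

End Quotient.

Section Lifts.
Variables (K : Type) (le perp : K -> K -> Prop).
Hypothesis HK : causal_poset le perp.
Local Notation word := (word K).
Local Notation "u ≡ v" := (wequiv le u v) (at level 70).
Local Notation L := (Lgrp le).
Local Notation root := (root le).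
Local Notation spine := (spine le).
Local Notation cocycle := (cocycle le).
Local Notation class := (class le perp).
Local Notation rep := (@rep K le perp).

(* The loop at [v] obtained by reading [x] from [u] and carrying the result,
   a loop at the root, over to [v] along its spine. *)
Definition lift (u v : K) (x : word) : word := winv (spine v) ++ cocycle x u ++ spine v.

Lemma lift_closed_walk u v x : root u = root v -> is_word le x ->
  is_word le (lift u v x) /\ walk v v (lift u v x).
Proof.
  intros R Hx. unfold lift. split.
  - repeat (apply is_word_app; split); auto using is_word_winv, spine_is_word, cocycle_is_word.
  - eapply walk_cat; [apply walk_winv, spine_walk |]. eapply walk_cat; [| apply spine_walk].
    rewrite <- R. apply cocycle_closed_walk, Hx.
Qed.

Lemma Lgrp_lift u v x : root u = root v -> is_word le x -> L (lift u v x).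
Proof. intros R Hx. destruct (lift_closed_walk _ _ R Hx). eapply closed_walk_Lgrp; eauto. Qed.

Lemma lift_app u v x y : L x -> lift u v (x ++ y) ≡ lift u v x ++ lift u v y.
Proof.
  intro Hx. unfold lift. rewrite cocycle_Lgrp_app by exact Hx. rewrite <- !app_assoc.
  rewrite (app_assoc (spine v)), (app_winv_r (spine_is_word le v)). reflexivity.
Qed.

Lemma lift_same_class u v x y : same_class le perp x y -> lift u v x ≡ lift u v y.
Proof.
  intros [Hx [Hy H]]. unfold lift.
  enough (E : cocycle x u ≡ cocycle y u) by now rewrite E.
  apply wequiv_of_app_winv; [apply cocycle_is_word, Lgrp_is_word, Hy |].
  rewrite <- cocycle_Lgrp_winv, <- cocycle_Lgrp_app by assumption.
  exact (cocycle_CL HK u H).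
Qed.

Lemma lift_of_closed_walk u v p : is_word le p -> walk u u p ->
  lift u v p ≡ winv (spine v) ++ spine u ++ p ++ winv (spine u) ++ spine v.
Proof.
  intros Hp H. unfold lift. rewrite (proj2 (cocycle_walk Hp H u)).
  destruct (decide _) as [_|NE]; [| congruence]. now rewrite <- !app_assoc.
Qed.

Definition qlift (u v : K) (q : quotient le perp) : quotient le perp := class (lift u v (rep q)).

Lemma qlift_class u v x : root u = root v -> L x -> qlift u v (class x) = class (lift u v x).
Proof.
  intros R Hx. unfold qlift.
  apply class_wequiv; [apply Lgrp_lift, Lgrp_is_word, Lgrp_rep; exact R |].
  apply lift_same_class, rep_class, Hx.
Qed.

Lemma qlift_morph u v : root u = root v -> morphism (@qmul K le perp) (qlift u v).
Proof.
  intros R p q.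
  destruct (class_surj p) as [x [Hx ->]], (class_surj q) as [y [Hy ->]].
  rewrite qmul_class, !qlift_class, qmul_class; auto using Lgrp_app, Lgrp_lift, Lgrp_is_word.
  apply class_wequiv; [auto using Lgrp_lift, Lgrp_is_word, Lgrp_app |]. now apply lift_app.
Qed.

Lemma qlift_closed_walk u v p : root u = root v -> is_word le p -> walk u u p ->
  qlift u v (class p) = class (winv (spine v) ++ spine u ++ p ++ winv (spine u) ++ spine v).
Proof.
  intros R Hp H. rewrite qlift_class by eauto using closed_walk_Lgrp.
  apply class_wequiv; [auto using Lgrp_lift |]. now apply lift_of_closed_walk.
Qed.

Lemma qlift_qlift u v w q : root u = root v -> root v = root w ->
  qlift v w (qlift u v q) = qlift u w q.
Proof.
  intros Ruv Rvw. destruct (class_surj q) as [x [Hx ->]].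
  pose proof (Lgrp_is_word Hx) as Wx. destruct (lift_closed_walk _ _ Ruv Wx) as [W1 H1].
  rewrite (qlift_class u v), qlift_closed_walk, qlift_class by eauto using eq_trans.
  apply class_wequiv.
  - apply closed_walk_Lgrp with w.
    + repeat (apply is_word_app; split); auto using is_word_winv, spine_is_word, cocycle_is_word.
    + eapply walk_cat; [apply walk_winv, spine_walk |]. rewrite <- Rvw.
      eapply walk_cat; [apply spine_walk |]. eapply walk_cat; [exact H1 |].
      eapply walk_cat; [apply walk_winv, spine_walk |]. rewrite Rvw. apply spine_walk.
  - unfold lift. rewrite <- !app_assoc, (app_assoc (spine v)), (app_winv_r (spine_is_word le v)).
    cbn. rewrite (app_assoc (spine v)), (app_winv_r (spine_is_word le v)). reflexivity.
Qed.

End Lifts.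

Section Action.
Variables (K : Type) (le perp : K -> K -> Prop).
Hypothesis HK : causal_poset le perp.
Local Notation word := (word K).
Local Notation "u ≡ v" := (wequiv le u v) (at level 70).
Local Notation L := (Lgrp le).
Local Notation root := (root le).
Local Notation spine := (spine le).
Local Notation Q := (quotient le perp).
Local Notation class := (class le perp).
Local Notation qlift := (@qlift K le perp).
Local Notation qmul := (@qmul K le perp).
Local Notation qinv := (@qinv K le perp).
Local Notation qone := (qone le perp).

Definition enter (v : K) : (nat -> Q) -> nat -> Q :=
  transfer qmul qinv (qlift (root v) (root v)) (qlift v v) (qlift (root v) v).

Definition leave (v : K) : (nat -> Q) -> nat -> Q :=
  transfer_inv qmul qinv (qlift (root v) (root v)) (qlift v v) (qlift v (root v)).

Ltac transfer_hyps :=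
  intros; first [ apply qmulA | apply qmul1q | apply qmulq1 | apply qmulVq | apply qmulqV
                | apply qlift_morph | apply qlift_qlift ];
  try assumption; rewrite ?root_idem; reflexivity.

Lemma enter_leave v z : enter v (leave v z) = z.
Proof. apply transferK with (one := qone); transfer_hyps. Qed.

Lemma leave_enter v z : leave v (enter v z) = z.
Proof. apply transfer_invK with (one := qone); transfer_hyps. Qed.

Lemma enter_rmul0 v a z : qlift (root v) (root v) a = a ->
  enter v (rmul0 qmul a z) = rmul0 qmul (qlift (root v) v a) (enter v z).
Proof. intro Ha. apply transfer_rmul0 with (one := qone); [transfer_hyps .. | exact Ha]. Qed.

Definition act_letter (b : simplex K) (z : nat -> Q) : nat -> Q :=
  enter (bd0 b) (rmul0 qmul (class (letter_loop le b)) (leave (bd1 b) z)).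

Fixpoint act (w : word) (z : nat -> Q) : nat -> Q :=
  match w with [] => z | b :: w' => act w' (act_letter b z) end.

Lemma act_app (w1 w2 : word) z : act (w1 ++ w2) z = act w2 (act w1 z).
Proof. revert z. induction w1; cbn; auto. Qed.

Lemma Lgrp_letter_loop b : T1 le b -> L (letter_loop le b).
Proof.
  intro Hb. apply closed_walk_Lgrp with (root (bd1 b)); [now apply letter_loop_is_word |].
  unfold letter_loop. eapply walk_cat; [apply spine_walk |].
  eapply walk_cat; [apply walk_letter |]. rewrite <- (root_T1 Hb). apply walk_winv, spine_walk.
Qed.

Lemma rmul0_class_nil x z : L x -> x ≡ [] -> rmul0 qmul (class x) z = z.
Proof.
  intros Hx E. rewrite (class_wequiv perp Hx E). apply rmul0_one, qmulq1.
Qed.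

Lemma act_letter_opp b z : T1 le b -> act_letter (opp b) (act_letter b z) = z.
Proof.
  intro Hb. unfold act_letter. cbn. rewrite leave_enter, rmul0_rmul0 by apply qmulA.
  rewrite qmul_class by auto using Lgrp_letter_loop, T1_opp.
  rewrite rmul0_class_nil by auto using Lgrp_app, Lgrp_letter_loop, T1_opp, letter_loop_opp.
  apply enter_leave.
Qed.

Lemma act_wequiv (w w' : word) z : w ≡ w' -> act w z = act w' z.
Proof.
  intro E. revert w w' E z.
  apply (@wequiv_ind K le (fun w w' => forall z, act w z = act w' z)).
  - reflexivity.
  - intros; symmetry; auto.
  - intros u v w H1 H2 z. now rewrite H1.
  - intros l1 l2 b Hb z. rewrite !act_app. cbn. now rewrite act_letter_opp.
Qed.

Lemma act_walk (w : word) a c z : is_word le w -> walk a c w ->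
  act w z = enter c (rmul0 qmul (class (spine a ++ w ++ winv (spine c))) (leave a z)).
Proof.
  intros Hw H. revert z. induction H as [a|a c b w <- Hwalk IH]; intro z; cbn.
  - rewrite rmul0_class_nil, enter_leave; [reflexivity | | apply app_winv_r, spine_is_word].
    apply closed_walk_Lgrp with (root a).
    + apply is_word_app; auto using spine_is_word, is_word_winv.
    + apply walk_cat with a; auto using spine_walk, walk_winv.
  - inversion Hw as [|? ? Hb Hw']; subst. rewrite IH by exact Hw'. unfold act_letter.
    rewrite leave_enter, rmul0_rmul0 by apply qmulA. f_equal. f_equal.
    assert (Rc : root (bd0 b) = root c) by (apply root_eq; now exists w).
    assert (Lw : L (spine (bd0 b) ++ w ++ winv (spine c))).
    { apply closed_walk_Lgrp with (root (bd0 b)).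
      - repeat (apply is_word_app; split); auto using spine_is_word, is_word_winv.
      - eapply walk_cat; [apply spine_walk |]. eapply walk_cat; [exact Hwalk |].
        rewrite Rc. apply walk_winv, spine_walk. }
    rewrite qmul_class by auto using Lgrp_letter_loop.
    apply class_wequiv; [auto using Lgrp_app, Lgrp_letter_loop |].
    unfold letter_loop. rewrite <- !app_assoc. cbn.
    rewrite (app_assoc (winv _)), (app_winv_l (spine_is_word le _)). reflexivity.
Qed.

Lemma act_closed_walk (p : word) v z : is_word le p -> walk v v p -> act p z = rmul0 qmul (class p) z.
Proof.
  intros Hp H. rewrite (act_walk z Hp H).
  set (q := spine v ++ p ++ winv (spine v)).
  assert (Wq : is_word le q).
  { repeat (apply is_word_app; split); auto using spine_is_word, is_word_winv. }
  assert (Hq : walk (root v) (root v) q) by exact (walk_conj (spine_walk le v) H).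
  assert (Rv : root (root v) = root v) by apply root_idem.
  rewrite enter_rmul0, enter_leave.
  - rewrite (qlift_closed_walk HK v Rv Wq Hq), spine_root. cbn. f_equal.
    symmetry. apply class_wequiv; [eapply closed_walk_Lgrp; eauto |]. unfold q.
    rewrite <- !app_assoc, (app_assoc (winv _)), (app_winv_l (spine_is_word le v)). cbn.
    now rewrite app_nil_r.
  - rewrite (qlift_closed_walk HK (root v) eq_refl Wq Hq), spine_root. cbn. now rewrite app_nil_r.
Qed.

Lemma act_Lgrp l z : L l -> act l z = rmul0 qmul (class l) z.
Proof.
  intro H. revert z.
  induction H as [p Hp| |u v Hu IHu Hv IHv|u Hu IH|u u' Hu IH E]; intro z.
  - destruct (is_loop_walk Hp) as [v Hv]. exact (act_closed_walk z (proj1 Hp) Hv).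
  - symmetry. apply rmul0_one, qmulq1.
  - unfold wmul. rewrite act_app, IHv, IHu, rmul0_rmul0, qmul_class by (auto || apply qmulA).
    reflexivity.
  - pose proof (Lgrp_is_word Hu) as Wu.
    assert (Z : act u (rmul0 qmul (class (winv u)) z) = z).
    { rewrite IH, rmul0_rmul0, qmul_class by (auto using Lgrp_winv || apply qmulA).
      apply rmul0_class_nil; [auto using Lgrp_app, Lgrp_winv | now apply app_winv_l]. }
    rewrite <- Z at 1. rewrite <- act_app. apply (act_wequiv _ (app_winv_r Wu)).
  - rewrite <- (act_wequiv z E), IH. f_equal. now apply class_wequiv.
Qed.

Lemma act_CF c z : CF le perp c -> act c z = z.
Proof.
  intro H. revert z.
  induction H as [c [w [p1 [p2 [Hw [L1 [L2 [D ->]]]]]]]| |u v Hu IHu Hv IHv|u Hu IH|u u' Hu IH E];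
    intro z.
  - pose proof (loop_commutator_Lgrp L1 L2) as Lc.
    rewrite commutator_word_eq, (act_app (winv w)), (act_app _ w), (act_Lgrp _ Lc).
    rewrite (proj2 (class_eq_qone perp Lc) (loop_commutator_CL L1 L2 D)), rmul0_one
      by apply qmulq1.
    rewrite <- act_app. apply (act_wequiv _ (app_winv_l Hw)).
  - reflexivity.
  - unfold wmul. now rewrite act_app, IHv, IHu.
  - rewrite <- (IH z) at 1. rewrite <- act_app.
    apply (act_wequiv _ (app_winv_r (CF_is_word Hu))).
  - now rewrite <- (act_wequiv z E).
Qed.

Lemma CF_Lgrp_CL w : CF le perp w -> L w -> CL le perp w.
Proof.
  intros Hc Hl. apply (class_eq_qone perp Hl).
  pose (z := fun _ : nat => qone).
  pose proof (f_equal (fun y => y 0) (act_CF z Hc)) as E. cbn beta in E.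
  rewrite (act_Lgrp z Hl) in E. cbn in E. now rewrite qmul1q in E.
Qed.

End Action.

Theorem lemma3p3 (K : Type) (le perp : K -> K -> Prop)
  (HK : causal_poset le perp) :
  forall w : word K, is_word le w ->
    (CL le perp w <-> CF le perp w /\ Lgrp le w).
Proof.
  intros w _. split.
  - intro H. split; [exact (CL_CF H) | exact (CL_Lgrp H)].
  - intros [Hc Hl]. exact (CF_Lgrp_CL HK Hc Hl).
Qed.
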